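(* Let $k$ and $n$ be positive integers with $n\geq 4^k$. Let $H_{k,n}$ be the $n$-vertex graph consisting of a clique $K_k$ together with $n-k$ isolated vertices, and let $G_{k,n}$ be the $(n+1)$-vertex graph obtained from $H_{k,n}$ by adding a new vertex adjacent to all $n$ vertices of $H_{k,n}$. Then $r(G_{k,n}) > nk$.
   Context: For a graph $F$, the Ramsey number $r(F)$ is the minimum $N$ such that every two-coloring of the edges of $K_N$ contains a monochromatic copy of $F$. *)

From mathcomp Require Import all_boot.
Set Implicit Arguments. Unset Strict Implicit. Unset Printing Implicit Defensive.

Definition simple_graph (V : finType) (F : rel V) : Prop :=
  (forall u v, F u v = F v u) /\ (forall u, F u u = false).

(* Every two-colouring of the edges of K_N (a symmetric colouring
   c : 'I_N -> 'I_N -> bool; diagonal values are irrelevant) contains a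
   monochromatic copy of F: an injective vertex map f with all edges of F
   sent to edges of colour b. *)
Definition ramsey_prop (V : finType) (F : rel V) (N : nat) : Prop :=
  forall c : 'I_N -> 'I_N -> bool, (forall x y, c x y = c y x) ->
  exists (b : bool) (f : V -> 'I_N),
    injective f /\ forall u v, F u v -> c (f u) (f v) = b.

Definition Hkn (k n : nat) : rel 'I_n :=
  fun i j => [&& i != j, (i < k)%N & (j < k)%N].
Arguments Hkn k n : clear implicits.

(* G_{k,n}: vertices option 'I_n, None is the new apex vertex adjacent
   to all n vertices of H_{k,n}. *)
Definition Gkn (k n : nat) : rel (option 'I_n) :=
  fun x y => match x, y with
             | Some i, Some j => Hkn k n i j
             | Some _, None | None, Some _ => true
             | None, None => false
             end.
Arguments Gkn k n : clear implicits.

From mathcomp Require Import all_boot.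

Set Implicit Arguments.
Unset Strict Implicit.

(* The Chvatal-Harary colouring.  Cut 'I_N, with N <= n k, into at most k
   blocks of n consecutive vertices; colour an edge [true] inside a block and
   [false] between blocks.  A [true] copy of G_{k,n} lies in a single block,
   since the apex is adjacent to every other vertex, but it has n + 1 > n
   vertices.  A [false] copy sends the (k+1)-clique formed by the apex and
   K_k to k + 1 distinct blocks, but there are only k of them. *)

Section Blocks.

Variables n N : nat.
Hypothesis n_gt0 : (0 < n)%N.

Definition same_block (x y : 'I_N) : bool := x %/ n == y %/ n.

Lemma same_block_sym x y : same_block x y = same_block y x.
Proof. exact: eq_sym. Qed.

Lemma card_le_block (V : finType) (f : V -> 'I_N) (b : nat) :
  injective f -> (forall v, f v %/ n = b) -> (#|V| <= n)%N.
Proof.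
move=> f_inj f_b; pose g v := Ordinal (ltn_pmod (f v) n_gt0).
rewrite -[n in (_ <= n)%N]card_ord; apply: (leq_card g) => u v /(congr1 val) /= eq_mod.
by apply: f_inj; apply: val_inj; rewrite /= (divn_eq (f u) n) (divn_eq (f v) n) eq_mod !f_b.
Qed.

Lemma card_le_blocks (V : finType) (f : V -> 'I_N) (k : nat) :
  (N <= n * k)%N -> (forall u v, u != v -> ~~ same_block (f u) (f v)) ->
  (#|V| <= k)%N.
Proof.
move=> le_N_nk f_apart.
have lt_block v : (f v %/ n < k)%N.
  by rewrite ltn_divLR // mulnC (leq_trans (ltn_ord (f v))).
rewrite -[k in (_ <= k)%N]card_ord.
apply: (leq_card (fun v => Ordinal (lt_block v))) => u v /(congr1 val) /= eq_block.
by case: (eqVneq u v) => // /f_apart; rewrite /same_block eq_block eqxx.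
Qed.

End Blocks.

Definition Gkn_clique {k n : nat} (le_kn : (k <= n)%N) :
  option 'I_k -> option 'I_n := omap (widen_ord le_kn).

Lemma Gkn_clique_adj {k n : nat} (le_kn : (k <= n)%N) (x y : option 'I_k) :
  x != y -> Gkn k n (Gkn_clique le_kn x) (Gkn_clique le_kn y).
Proof.
rewrite /Gkn_clique; case: x y => [i|] [j|] //= ne_ij.
by rewrite /Hkn (ltn_ord i) (ltn_ord j) !andbT; apply: contra ne_ij => /eqP[/val_inj ->].
Qed.

Theorem lemma2p2 (k n : nat) :
  (0 < k)%N -> (0 < n)%N -> (4 ^ k <= n)%N ->
  forall N : nat, ramsey_prop (Gkn k n) N -> (n * k < N)%N.
Proof.
move=> _ n_gt0 le_4k_n N ramsey; rewrite ltnNge; apply/negP => le_N_nk.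
have [[] [f [f_inj f_mono]]] := ramsey _ (@same_block_sym n N).
- have : (#|{: option 'I_n}| <= n)%N.
    apply: (card_le_block n_gt0 (b := f None %/ n) f_inj) => -[i|] //.
    by apply/eqP; rewrite eq_sym; apply: f_mono.
  by rewrite card_option card_ord ltnn.
- have le_kn : (k <= n)%N := leq_trans (ltnW (ltn_expl k (isT : 1 < 4)%N)) le_4k_n.
  have : (#|{: option 'I_k}| <= k)%N.
    apply: (card_le_blocks n_gt0 (f := f \o Gkn_clique le_kn) le_N_nk) => x y ne_xy.
    by rewrite /= f_mono ?Gkn_clique_adj.
  by rewrite card_option card_ord ltnn.
Qed.
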